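(* In the setting of the context, with $d=[G:H]$, the degree of the Kanev correspondence is $$\deg\overline K_w=1-d\,((w,w)+1).$$
   Context: $G$ finite group, $\Lambda$ absolutely irreducible $\mathbb Z[G]$-module of finite rank, $W=\Lambda\otimes\mathbb Q$, $w$ a weight ($gw-w\in\Lambda$ for all $g$), $(\,,\,)$ the negative definite $G$-invariant symmetric bilinear form on $W$ with (i) $(w,\lambda)\in\mathbb Z$ for all $\lambda\in\Lambda$ and (ii) every $G$-invariant symmetric form satisfying (i) is an integer multiple of it; $H=\mathrm{Stab}_G(w)$. $\pi:X\to\mathbb P^1$ Galois covering with group $G$, $C=X/H$, $\psi:C\to\mathbb P^1$. Kanev correspondence: $U$ = complement of the branch locus of $\psi$, $\xi_0\in U$, points of $\psi^{-1}(\xi_0)$ labelled by $Gw$ via a fixed $G$-equivariant bijection; for $\xi\in U$ a path $\gamma_\xi$ in $U$ to $\xi_0$ defines $\mu:\psi^{-1}(\xi)\to Gw$ (endpoint of the lift starting at $c$); $\overline K_w$ is the closure in $C\times C$ of the divisor given over $U$ by $\overline K_w(c)=\sum_{v\in Gw,\,v\ne\mu(c)}[(\mu(c),v)-(w,w)-1]\mu^{-1}(v)$. The degree of a correspondence $D$ is the degree of the divisor $D(c)$. *)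

From mathcomp Require Import all_boot all_order all_algebra all_fingroup.
From mathcomp Require Import mxrepresentation.
Set Implicit Arguments. Unset Strict Implicit. Unset Printing Implicit Defensive.
Import Order.TTheory GRing.Theory Num.Theory.
Local Open Scope ring_scope.

(* Lattice Lambda = Z^n inside W = Q^n (row vectors); G acts on the right by
   v |-> v *m rG g.  Bilinear forms are given by their Gram matrices. *)

Definition intmx (m n : nat) (A : 'M[rat]_(m, n)) : Prop :=
  forall i j, A i j \is a Num.int.

Definition bform (n : nat) (B : 'M[rat]_n) (x y : 'rV[rat]_n) : rat :=
  (x *m B *m y^T) 0 0.

Definition sym_gram (n : nat) (B : 'M[rat]_n) : Prop := B^T = B.

Definition invariant_form (gT : finGroupType) (G : {group gT}) (n : nat)
  (rG : mx_representation rat G n) (B : 'M[rat]_n) : Prop :=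
  forall g, g \in G -> rG g *m B *m (rG g)^T = B.

Definition neg_definite (n : nat) (B : 'M[rat]_n) : Prop :=
  forall x : 'rV[rat]_n, x != 0 -> bform B x x < 0.

Definition is_weight (gT : finGroupType) (G : {group gT}) (n : nat)
  (rG : mx_representation rat G n) (w : 'rV[rat]_n) : Prop :=
  forall g, g \in G -> intmx (w *m rG g - w).

Definition integral_on_weight (n : nat) (B : 'M[rat]_n) (w : 'rV[rat]_n) : Prop :=
  forall lam : 'rV[rat]_n, intmx lam -> bform B w lam \is a Num.int.

Definition orbit_w (gT : finGroupType) (G : {group gT}) (n : nat)
  (rG : mx_representation rat G n) (w : 'rV[rat]_n) : seq 'rV[rat]_n :=
  undup [seq w *m rG g | g <- enum G].

Definition stab_w (gT : finGroupType) (G : {group gT}) (n : nat)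
  (rG : mx_representation rat G n) (w : 'rV[rat]_n) : {set gT} :=
  [set g in G | w *m rG g == w].

(* coefficient of mu^{-1}(v) in the Kanev divisor K_w(c), where u = mu(c) *)
Definition kanev_coeff (n : nat) (B : 'M[rat]_n) (w u v : 'rV[rat]_n) : rat :=
  if v == u then 0 else bform B u v - bform B w w - 1.

(* degree of the divisor K_w(c) = sum_{v in Gw, v <> mu(c)} coeff * [mu^{-1}(v)],
   the points mu^{-1}(v) being pairwise distinct (mu is a bijection onto Gw). *)
Definition kanev_degree (gT : finGroupType) (G : {group gT}) (n : nat)
  (rG : mx_representation rat G n) (B : 'M[rat]_n) (w u : 'rV[rat]_n) : rat :=
  \sum_(v <- orbit_w rG w) kanev_coeff B w u v.

From mathcomp Require Import all_boot all_order all_algebra all_fingroup.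
From mathcomp Require Import mxrepresentation.
From mathcomp Require Import ring.
Set Implicit Arguments. Unset Strict Implicit. Unset Printing Implicit Defensive.
Import Order.TTheory GRing.Theory Num.Theory.
Local Open Scope ring_scope.

(* The sum of the orbit Gw is a G-fixed vector of the nontrivial irreducible
   module W, hence zero; so for u in Gw the values (u, v), v in Gw, add up to
   0 and the off-diagonal ones add up to -(u, u) = -(w, w).  The constant part
   -(w, w) - 1 of each coefficient contributes (d - 1) times, where
   d = |Gw| = [G : H] by the orbit-stabiliser count. *)

Lemma size_undup_map_eq (T U V : eqType) (f : T -> U) (g : T -> V) (s : seq T) :
  {in s &, forall x y, (f x == f y) = (g x == g y)} ->
  size (undup (map f s)) = size (undup (map g s)).
Proof.
elim: s => [|x s IHs] fg //=.
have fg_s : {in s &, forall x y, (f x == f y) = (g x == g y)}.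
  by move=> a b sa sb; apply: fg; rewrite inE ?sa ?sb orbT.
have -> : (f x \in map f s) = (g x \in map g s).
  apply/mapP/mapP => -[y sy /eqP e]; exists y => //; apply/eqP.
    by rewrite -fg ?inE ?eqxx ?sy ?orbT.
  by rewrite fg ?inE ?eqxx ?sy ?orbT.
by case: ifP => _ //=; rewrite IHs.
Qed.

Lemma card_undup (T : finType) (s : seq T) : #|s| = size (undup s).
Proof. by rewrite -(eq_card (mem_undup s)); apply/card_uniqP/undup_uniq. Qed.

Lemma mx_irr_fixed_row0 (F : fieldType) (gT : finGroupType) (G : {group gT})
    (n : nat) (rG : mx_representation F G n) (x : 'rV[F]_n) :
  mx_irreducible rG -> (exists2 g, g \in G & rG g != 1%:M) ->
  (forall g, g \in G -> x *m rG g = x) -> x = 0.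
Proof.
move=> [_ _ irrG] [g Gg rGg_neq1] fixx; apply/eqP; apply: contraNT rGg_neq1 => x_neq0.
have modx : mxmodule rG <<x>>%MS.
  by rewrite (eqmx_module _ (genmxE x)); apply/mxmoduleP => h Gh; rewrite fixx.
have /submxP[D defD] : (1%:M <= x)%MS.
  rewrite -(genmxE x); apply: irrG => //; first exact: submx1.
  by rewrite -mxrank_eq0 genmxE mxrank_eq0.
by rewrite -[rG g]mul1mx defD -mulmxA fixx.
Qed.

Section Bform.
Variables (n : nat) (B : 'M[rat]_n).

Lemma bformr0 (x : 'rV[rat]_n) : bform B x 0 = 0.
Proof. by rewrite /bform trmx0 mulmx0 mxE. Qed.

Lemma bform_sumr (x : 'rV[rat]_n) (s : seq 'rV[rat]_n) :
  bform B x (\sum_(y <- s) y) = \sum_(y <- s) bform B x y.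
Proof.
elim: s => [|y s IHs]; first by rewrite !big_nil bformr0.
by rewrite !big_cons -IHs /bform raddfD /= mulmxDr mxE.
Qed.

End Bform.

Section Orbit.
Variables (gT : finGroupType) (G : {group gT}) (n : nat).
Variables (rG : mx_representation rat G n) (w : 'rV[rat]_n).

Lemma orbit_wP v : v \in orbit_w rG w -> exists2 h, h \in G & v = w *m rG h.
Proof. by rewrite mem_undup => /mapP[h]; rewrite mem_enum => Gh ->; exists h. Qed.

Lemma mem_orbit_w h : h \in G -> w *m rG h \in orbit_w rG w.
Proof. by move=> Gh; rewrite mem_undup; apply: map_f; rewrite mem_enum. Qed.

Lemma mem_rcoset_stab_w x y : x \in G ->
  (y \in stab_w rG w :* x)%g = (y \in G) && (w *m rG y == w *m rG x).
Proof.
move=> Gx; rewrite mem_rcoset inE groupMr ?groupV //.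
case Gy: (y \in G) => //=.
rewrite repr_mxM ?groupV // repr_mxV // mulmxA.
have rGx_unit := repr_mx_unit rG Gx.
apply/eqP/eqP => [e|->]; last by rewrite mulmxK.
by rewrite -[in LHS](mulmxKV rGx_unit (w *m rG y)) e.
Qed.

Lemma size_orbit_w : size (orbit_w rG w) = #|G : stab_w rG w|%g.
Proof.
rewrite /indexg /rcosets imset_card card_undup /orbit_w /image_mem.
apply: size_undup_map_eq => x y; rewrite !mem_enum => Gx Gy.
rewrite !rcosetE; apply/eqP/eqP => [e|e].
  by apply/setP => z; rewrite !mem_rcoset_stab_w // e.
have : x \in (stab_w rG w :* x)%g by rewrite mem_rcoset_stab_w // Gx eqxx.
by rewrite e mem_rcoset_stab_w // => /andP[_ /eqP].
Qed.

Lemma sum_orbit_w_fixed g : g \in G ->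
  (\sum_(v <- orbit_w rG w) v) *m rG g = \sum_(v <- orbit_w rG w) v.
Proof.
move=> Gg; rewrite mulmx_suml -(big_map (fun v => v *m rG g) xpredT id).
apply/perm_big/uniq_perm; rewrite ?undup_uniq //.
  rewrite map_inj_uniq ?undup_uniq //.
  by apply: (can_inj (g := fun v => v *m invmx (rG g))) => v; rewrite mulmxK ?repr_mx_unit.
move=> v; apply/mapP/idP => [[u /orbit_wP[h Gh ->] ->]|/orbit_wP[h Gh ->]].
  by rewrite -mulmxA -repr_mxM ?mem_orbit_w ?groupM.
exists (w *m rG (h * g^-1)%g); first by rewrite mem_orbit_w ?groupM ?groupV.
by rewrite -mulmxA -repr_mxM ?groupM ?groupV // mulgKV.
Qed.

Lemma bform_orbit_w (B : 'M[rat]_n) v : invariant_form rG B ->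
  v \in orbit_w rG w -> bform B v v = bform B w w.
Proof.
move=> invB /orbit_wP[h Gh ->].
by rewrite /bform trmx_mul -!mulmxA (mulmxA (rG h)) (mulmxA (rG h *m B)) invB.
Qed.

Lemma kanev_degreeE (B : 'M[rat]_n) u : u \in orbit_w rG w ->
  kanev_degree rG B w u =
    bform B u (\sum_(v <- orbit_w rG w) v) - bform B u u
    - ((size (orbit_w rG w))%:R - 1) * (bform B w w + 1).
Proof.
move=> orb_u; have uniq_orb := undup_uniq [seq w *m rG g | g <- enum G].
rewrite bform_sumr /kanev_degree !(bigD1_seq u orb_u uniq_orb) /=.
rewrite /kanev_coeff eqxx add0r (addrC (bform B u u)) addrK.
rewrite (eq_bigr (fun v => bform B u v - (bform B w w + 1))); last first.
  by move=> v /negbTE ->; rewrite opprD addrA.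
have count_neq : (count (predC1 u) (orbit_w rG w)).+1 = size (orbit_w rG w).
  by rewrite -(count_predC (pred1 u)) count_uniq_mem // orb_u.
by rewrite sumrB big_const_seq iter_addr_0 -count_neq -natr1 addrK mulr_natl.
Qed.

End Orbit.

Theorem corollary3p8 (gT : finGroupType) (G : {group gT}) (n : nat)
  (rG : mx_representation rat G n)
  (HLam : forall g, g \in G -> intmx (rG g))
  (Habs : mx_absolutely_irreducible rG)
  (* needed: for the trivial module d = 1 and the degree is 0, not -(w, w) *)
  (Hnontriv : exists2 g, g \in G & rG g != 1%:M)
  (w : 'rV[rat]_n) (Hw : is_weight rG w)
  (B : 'M[rat]_n)
  (HBsym : sym_gram B) (HBinv : invariant_form rG B)
  (HBneg : neg_definite B)
  (HBi : integral_on_weight B w)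
  (HBii : forall B' : 'M[rat]_n, sym_gram B' -> invariant_form rG B' ->
            integral_on_weight B' w -> exists k : int, B' = k%:~R *: B)
  (u : 'rV[rat]_n) (Hu : u \in orbit_w rG w) :
  kanev_degree rG B w u
    = 1 - (#|G : stab_w rG w|%g)%:R * (bform B w w + 1).
Proof.
have sum_orbit0 : \sum_(v <- orbit_w rG w) v = 0.
  apply: (mx_irr_fixed_row0 (mx_abs_irrW Habs) Hnontriv).
  exact: sum_orbit_w_fixed.
rewrite kanev_degreeE // sum_orbit0 bformr0 (bform_orbit_w HBinv Hu).
by rewrite size_orbit_w; ring.
Qed.
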